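(* Let $\mathcal G=(G,f,h)$ be a network dynamical system of size $N$ satisfying Assumptions 1 and 2, and for each $q\in[N]$ let $x^q(1)$ be the time-1 state from a $q$-pinching initial condition, $\phi_q\in\mathbb R^{P\times N}$, and $y^q(1)=\phi_q x^q(1)$. If for a given $q$ the problem $\min\|\tilde x\|_0$ subject to $\phi_q\tilde x=y^q(1)$ has $x^q(1)$ as its unique solution, then $L_1(q)$ is determined by $(\phi_q,y^q(1))$, namely $L_1(q)=\operatorname{supp}(x^q_* )\setminus\{q\}$ where $x^q_*$ is that unique solution. If this holds for every $q\in[N]$, then the adjacency matrix $A$ is uniquely determined by $\{(\phi_q,y^q(1))\}_{q=1}^N$ via $A_{ij}=1$ iff $i\neq j$ and $i\in\operatorname{supp}(x^j_* )$.
   Context: Let $G$ be a directed graph on vertex set $[N]=\{1,\dots,N\}$ without self-loops, with adjacency matrix $A\in\{0,1\}^{N\times N}$, where $A_{ij}=1$ if and only if $i$ receives an edge (input) from $j$; in particular $A_{ii}=0$. The first-level set of $q$ is $L_1(q)=\{i\in[N]: A_{iq}=1\}$. The network dynamical system $\mathcal G=(G,f,h)$ is the discrete-time system $x_i(t+1)=f_i(x_i(t))+\sum_{j=1}^N A_{ij}h_{ij}(x_i(t),x_j(t))$ for $i\in[N]$, $t=0,1,2,\dots$, where $f_i:\mathbb R\to\mathbb R$ and $h_{ij}:\mathbb R\times\mathbb R\to\mathbb R$. Assumption 1: $f_i(0)=0$ for all $i\in[N]$. Assumption 2: there is $\delta>0$ such that for all $i,j\in[N]$, $h_{ij}(0,0)=0$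 and $h_{ij}(0,v)\neq 0$ for every $v$ with $0<|v|<\delta$. For $q\in[N]$, a $q$-pinching initial condition is $x^q(0)$ with $x^q_i(0)=\epsilon_q\delta_{iq}$ (Kronecker delta), where $0<|\epsilon_q|<\delta$; $x^q(t)$ denotes the resulting trajectory. For $x\in\mathbb R^N$, $\operatorname{supp}(x)=\{i: x_i\neq0\}$ and $\|x\|_0=\#\operatorname{supp}(x)$. *)

(* states are column vectors 'cV[R]_N over a real field,
   vertices are 'I_N (i.e. [N] shifted to {0,..,N-1}). *)
From HB Require Import structures.
From mathcomp Require Import all_boot all_order all_algebra.
From mathcomp Require Import reals.
Set Implicit Arguments. Unset Strict Implicit. Unset Printing Implicit Defensive.
Import Order.TTheory GRing.Theory Num.Theory.
Local Open Scope ring_scope.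

Section Defs.
Variable R : realType.
Variable N : nat.

(* A i j = true iff i receives an edge from j *)
Definition no_self_loops (A : 'I_N -> 'I_N -> bool) := forall i, A i i = false.

Definition nds_step (A : 'I_N -> 'I_N -> bool) (f : 'I_N -> R -> R)
  (h : 'I_N -> 'I_N -> R -> R -> R) (x : 'cV[R]_N) : 'cV[R]_N :=
  \col_i (f i (x i 0) + \sum_j (A i j)%:R * h i j (x i 0) (x j 0)).

Definition pinch (q : 'I_N) (eps : R) : 'cV[R]_N :=
  \col_i (if i == q then eps else 0).

Definition supp (x : 'cV[R]_N) : {set 'I_N} := [set i | x i 0 != 0].

Definition L1 (A : 'I_N -> 'I_N -> bool) (q : 'I_N) : {set 'I_N} :=
  [set i | A i q].

Definition assumption1 (f : 'I_N -> R -> R) := forall i, f i 0 = 0.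

Definition assumption2 (h : 'I_N -> 'I_N -> R -> R -> R) (delta : R) :=
  0 < delta /\ forall i j, h i j 0 0 = 0 /\
    forall v : R, 0 < `|v| < delta -> h i j 0 v != 0.

Definition unique_l0_sol (P : nat) (phi : 'M[R]_(P, N)) (y : 'cV[R]_P)
  (x : 'cV[R]_N) :=
  phi *m x = y /\
  forall z : 'cV[R]_N, phi *m z = y -> z <> x -> (#|supp x| < #|supp z|)%N.
End Defs.

(* Away from q the pinched state vanishes, so by Assumptions 1 and 2 the only
   surviving term of x_i(1) for i <> q is A_iq h_iq(0, eps), which is nonzero
   exactly when A_iq = 1; hence supp x^q(1) \ {q} = L_1(q). A unique l0-minimiser
   is unique among all l0-minimisers, so it coincides with x^q(1). *)
From HB Require Import structures.
From mathcomp Require Import all_boot all_order all_algebra.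
From mathcomp Require Import reals.
Set Implicit Arguments. Unset Strict Implicit. Unset Printing Implicit Defensive.
Import Order.TTheory GRing.Theory Num.Theory.
Local Open Scope ring_scope.

Lemma unique_l0_sol_eq (R : realType) (N P : nat) (phi : 'M[R]_(P, N))
    (y : 'cV[R]_P) (x x' : 'cV[R]_N) :
  unique_l0_sol phi y x -> unique_l0_sol phi y x' -> x' = x.
Proof.
move=> [phix minx] [phix' minx']; apply/eqP/negP => /negP/eqP neq.
have := ltn_trans (minx x' phix' neq) (minx' x phix (nesym neq)).
by rewrite ltnn.
Qed.

Section PinchedStep.
Variables (R : realType) (N : nat) (A : 'I_N -> 'I_N -> bool).
Variables (f : 'I_N -> R -> R) (h : 'I_N -> 'I_N -> R -> R -> R) (delta : R).
Hypotheses (H1 : assumption1 f) (H2 : assumption2 h delta).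

Lemma nds_step_pinch_neq (q i : 'I_N) (e : R) : i != q ->
  nds_step A f h (pinch q e) i 0 = (A i q)%:R * h i q 0 e.
Proof.
move=> /negbTE neq; rewrite !mxE neq H1 add0r (bigD1 q) //= big1 ?addr0.
- by rewrite !mxE eqxx.
move=> j /negbTE njq; rewrite !mxE njq.
by case: H2 => _ /(_ i j) [-> _]; rewrite mulr0.
Qed.

Lemma L1_supp_nds_step_pinch (q : 'I_N) (e : R) :
  no_self_loops A -> 0 < `|e| < delta ->
  L1 A q = supp (nds_step A f h (pinch q e)) :\ q.
Proof.
move=> hA he; apply/setP => i; rewrite !inE.
have [->|neq] := eqVneq i q; first by rewrite hA.
rewrite nds_step_pinch_neq //=; case: (A i q); last by rewrite mul0r eqxx.
by rewrite mul1r; case: H2 => _ /(_ i q) [_ /(_ e he)].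
Qed.

End PinchedStep.

Theorem mainTheorem8 (R : realType) (N P : nat)
  (A : 'I_N -> 'I_N -> bool) (f : 'I_N -> R -> R)
  (h : 'I_N -> 'I_N -> R -> R -> R) (delta : R)
  (hA : no_self_loops A) (H1 : assumption1 f) (H2 : assumption2 h delta)
  (eps : 'I_N -> R) (heps : forall q, 0 < `|eps q| < delta)
  (phi : 'I_N -> 'M[R]_(P, N)) :
  let x1 := fun q => nds_step A f h (pinch q (eps q)) in
  let y1 := fun q => phi q *m x1 q in
  (forall q : 'I_N, unique_l0_sol (phi q) (y1 q) (x1 q) ->
     forall xs : 'cV[R]_N, unique_l0_sol (phi q) (y1 q) xs ->
       L1 A q = supp xs :\ q)
  /\
  ((forall q : 'I_N, unique_l0_sol (phi q) (y1 q) (x1 q)) ->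
     forall xs : 'I_N -> 'cV[R]_N,
       (forall q, unique_l0_sol (phi q) (y1 q) (xs q)) ->
       forall i j : 'I_N, A i j = (i != j) && (i \in supp (xs j))).
Proof.
move=> x1 y1.
have L1_supp q : unique_l0_sol (phi q) (y1 q) (x1 q) ->
    forall xs, unique_l0_sol (phi q) (y1 q) xs -> L1 A q = supp xs :\ q.
  move=> solx1 xs solxs; rewrite (unique_l0_sol_eq solx1 solxs).
  exact: (L1_supp_nds_step_pinch H1 H2 q hA (heps q)).
split=> // solx1 xs solxs i j.
by have /setP/(_ i) := L1_supp j (solx1 j) (xs j) (solxs j); rewrite !inE.
Qed.
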